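(* Let $g\ge0$, $n\ge1$ be integers and $\mathcal{A}\in\mathcal{D}_{g,n}$ a weight datum. Let $\mathcal{A}_1,\dots,\mathcal{A}_{N-1},\mathcal{A}_N=\mathcal{A}$ be weight data lying in chambers $Ch_{\mathcal{A}_p}\ni\mathcal{A}_p$ such that $$[Ch_{\mathcal{A}_1}]\leq [Ch_{\mathcal{A}_2}]\leq \dots\leq [Ch_{\mathcal{A}_{N-1}}]\leq [Ch_{\mathcal{A}}].$$ Then this sequence induces a filtration of chain complexes $$G^{(g,\mathcal{A}_1)}\hookrightarrow G^{(g,\mathcal{A}_2)}\hookrightarrow \dots\hookrightarrow G^{(g,\mathcal{A}_{N-1})}\hookrightarrow G^{(g,\mathcal{A})},$$ where each $G^{(g,\mathcal{A}_{p-1})}\hookrightarrow G^{(g,\mathcal{A}_p)}$, $p=2,\dots,N$, is an injective map of chain complexes.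
   Context: A weight datum is $\mathcal{A}=(a_1,\dots,a_n)$ with $a_i\in\mathbb{Q}\cap(0,1]$ and $2g-2+\sum_i a_i>0$; $\mathcal{D}_{g,n}\subset\mathbb{R}^n$ is the set of weight data. For $S\subseteq\{1,\dots,n\}$ with $2\le|S|\le n$ if $g\ge1$ (resp. $2\le|S|\le n-2$ if $g=0$), the wall $w_S$ is the locus $\sum_{i\in S}a_i=1$. Chambers are the connected components of the complement in $\mathcal{D}_{g,n}$ of all walls; each is determined by the direction ($<1$ or $>1$) of $\sum_{i\in S}a_i$ for each such $S$. Chambers are partially ordered by $Ch_1\le Ch_2$ iff for every such $S$, $\sum_{i\in S}a_i>1$ on $Ch_1$ implies $\sum_{i\in S}b_i>1$ on $Ch_2$. $S_n$ acts by permuting coordinates; $[Ch]$ is the $S_n$-orbit of a chamber, and $[Ch_1]\le[Ch_2]$ iff there are $Ch_1'\in[Ch_1]$, $Ch_2'\in[Ch_2]$ with $Ch_1'\le Ch_2'$. A $(g,\mathcal{A})$-stable graph is a finite connected graph $G$ (loops and multiple edges allowed) with vertex weight $w:V(G)\to\mathbb{Z}_{\ge0}$ and $n$ legs labelled $1,\dots,n$ attached via $m:\{1,\dots,n\}\to V(G)$, with $b_1(G)+\sum_v w(v)=g$ and $2w(v)-2+|v|_E+|v|_{\mathcal{A}}>0$ for every vertex $v$, where $|v|_E$ is the number of edge half-edges at $v$ (loops counted twice) and $|v|_{\mathcal{A}}=\sum_{m(i)=v}a_i$. The graph complex $G^{(g,\mathcal{A})}$ is the chain complex of rational vector spaces generated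 by pairs $[\mathbf{G},\omega]$, with $\mathbf{G}$ a $(g,\mathcal{A})$-stable graph and $\omega$ a total order of its edges, subject to $[\mathbf{G},\omega]=\mathrm{sgn}(\sigma)[\mathbf{G}',\omega']$ whenever there is an isomorphism of $n$-marked weighted graphs $\mathbf{G}\cong\mathbf{G}'$ under which $\omega,\omega'$ differ by $\sigma\in S_{|E(\mathbf{G})|}$; it is graded by the number of edges, with differential the signed sum of the contractions of the non-loop edges. *)

From HB Require Import structures.
From mathcomp Require Import all_boot all_order all_algebra.
From mathcomp Require Import fingroup perm.
From mathcomp Require Import freeg.

Set Implicit Arguments.
Unset Strict Implicit.
Unset Printing Implicit Defensive.

Import Order.TTheory GRing.Theory Num.Theory.
Local Open Scope ring_scope.

Definition weight_datum (g n : nat) (A : 'I_n -> rat) : Prop :=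
  (forall i, 0 < A i <= 1) /\ 0 < 2 * g%:R - 2 + \sum_(i < n) A i.

Definition wall_index (g n : nat) (S : {set 'I_n}) : bool :=
  if g is 0 then (2 <= #|S| <= n - 2)%N else (2 <= #|S| <= n)%N.

Definition wsum (n : nat) (A : 'I_n -> rat) (S : {set 'I_n}) : rat :=
  \sum_(i in S) A i.

Definition in_chamber (g n : nat) (A : 'I_n -> rat) : Prop :=
  forall S, wall_index g S -> wsum A S <> 1.

(* Ch_A <= Ch_B  (chambers are described by the side of each wall; the
   representatives A, B are assumed to lie in chambers) *)
Definition chamber_le (g n : nat) (A B : 'I_n -> rat) : Prop :=
  forall S, wall_index g S -> 1 < wsum A S -> 1 < wsum B S.

Definition permute_wd (n : nat) (s : 'S_n) (A : 'I_n -> rat) : 'I_n -> rat :=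
  fun i => A (s i).

Definition orbit_le (g n : nat) (A B : 'I_n -> rat) : Prop :=
  exists (s t : 'S_n), chamber_le g (permute_wd s A) (permute_wd t B).

(* A graph is (nv, w, E, m):  vertices 0..nv-1, vertex weights w (a list of
   length nv), the edges E as an ORDERED list of pairs of endpoints (the order
   of the list is the total order omega of the edges; (v,v) is a loop), and the
   legs m : leg i is attached to vertex nth 0 m i. *)

Definition sgraph := (nat * seq nat * seq (nat * nat) * seq nat)%type.

Definition nv (G : sgraph) : nat := G.1.1.1.
Definition wt (G : sgraph) : seq nat := G.1.1.2.
Definition edges (G : sgraph) : seq (nat * nat) := G.1.2.
Definition legs (G : sgraph) : seq nat := G.2.

Definition adj (G : sgraph) : rel 'I_(nv G) :=
  fun u v => ((val u, val v) \in edges G) || ((val v, val u) \in edges G).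

Arguments adj : clear implicits.

Definition connected (G : sgraph) : Prop :=
  forall u v : 'I_(nv G), connect (adj G) u v.

Definition betti1 (G : sgraph) : nat := (size (edges G) + 1 - nv G)%N.

(* |v|_E : number of edge half-edges at v (loops counted twice) *)
Definition valence (G : sgraph) (v : nat) : nat :=
  \sum_(e <- edges G) ((e.1 == v) + (e.2 == v))%N.

Definition leg_weight (n : nat) (A : 'I_n -> rat) (G : sgraph) (v : nat) : rat :=
  \sum_(i < n | nth 0%N (legs G) i == v) A i.

Definition stable_graph (g n : nat) (A : 'I_n -> rat) (G : sgraph) : Prop :=
  [/\ (0 < nv G)%N, size (wt G) = nv G, size (legs G) = n,
      all (fun e => (e.1 < nv G) && (e.2 < nv G))%N (edges G) &
      all (fun v => v < nv G)%N (legs G)] /\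
      [/\ connected G,
          (betti1 G + sumn (wt G))%N = g &
          forall v : 'I_(nv G),
            0 < 2 * (nth 0%N (wt G) v)%:R - 2 + (valence G v)%:R
                + leg_weight A G v].

(* An isomorphism of n-marked weighted graphs G ~ G' (vertex bijection pi,
   edge bijection sigma, sigma sending edge number j of G to edge number
   sigma j of G'); s is the sign sgn(sigma) of the induced permutation
   between the two edge orders. *)
Definition iso_sign (G G' : sgraph) (s : rat) : Prop :=
  exists (k m : nat) (pi : 'S_k) (sigma : 'S_m),
  [/\ nv G = k, nv G' = k, size (edges G) = m, size (edges G') = m &
      size (legs G') = size (legs G)] /\
   [/\ forall v : 'I_k, nth 0%N (wt G') (pi v) = nth 0%N (wt G) v,
       forall (i : nat) (v : 'I_k), (i < size (legs G))%N ->
         nth 0%N (legs G) i = val v -> nth 0%N (legs G') i = val (pi v),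
       forall (j : 'I_m) (a b : 'I_k),
         nth (0, 0)%N (edges G) j = (val a, val b) ->
         nth (0, 0)%N (edges G') (sigma j) = (val (pi a), val (pi b)) \/
         nth (0, 0)%N (edges G') (sigma j) = (val (pi b), val (pi a)) &
       s = (-1) ^+ odd_perm sigma].

(* Contraction of the (non-loop) edge number j = (a,b): b is merged into a,
   vertices are renumbered in order, the remaining edges keep their order. *)

Definition drop_vertex (b v : nat) : nat := if (v < b)%N then v else v.-1.

Definition contract (G : sgraph) (j : nat) : sgraph :=
  let e := nth (0, 0)%N (edges G) j in
  let a := e.1 in let b := e.2 in
  let mv v := if v == b then drop_vertex b a else drop_vertex b v in
  ((nv G).-1,
   [seq (nth 0%N (wt G) v + (if v == a then nth 0%N (wt G) b else 0))%N
     | v <- iota 0 (nv G) & v != b],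
   [seq (mv f.1, mv f.2) | f <- take j (edges G) ++ drop j.+1 (edges G)],
   map mv (legs G)).

Definition chain := {freeg sgraph / rat}.

Definition gen (G : sgraph) : chain := Freeg [:: (1, G)].

Definition in_span (P : chain -> Prop) (x : chain) : Prop :=
  exists s : seq (rat * chain),
    (forall p, p \in s -> P p.2) /\ x = \sum_(p <- s) p.1 *: p.2.

Definition cx_chain (g n : nat) (A : 'I_n -> rat) (x : chain) : Prop :=
  in_span (fun y => exists G, stable_graph g A G /\ y = gen G) x.

Definition cx_rel (g n : nat) (A : 'I_n -> rat) (x : chain) : Prop :=
  in_span (fun y => exists G G' s, [/\ stable_graph g A G, stable_graph g A G',
                                       iso_sign G G' s & y = gen G - s *: gen G'])
          x.

Definition dgen (G : sgraph) : chain :=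
  \sum_(j < size (edges G) | (nth (0, 0)%N (edges G) j).1
                              != (nth (0, 0)%N (edges G) j).2)
     (-1) ^+ j *: gen (contract G j).

Definition diff (x : chain) : chain := fglift dgen x.

Definition relabel (n : nat) (s : 'S_n) (G : sgraph) : sgraph :=
  (nv G, wt G, edges G, [seq nth 0%N (legs G) (val (s i)) | i <- enum 'I_n]).

Definition relabel_map (n : nat) (s : 'S_n) (x : chain) : chain :=
  fglift (fun G => gen (relabel s G)) x.

(* The map G^{(g,A)} -> G^{(g,B)} induced by G |-> relabel s G is
   well defined (sends (g,A)-stable graphs to (g,B)-stable graphs and
   relations to relations), is a chain map (commutes with the differentials
   modulo relations) and is injective on the quotients. *)
Definition induced_injective_chain_map (g n : nat) (A B : 'I_n -> rat)
    (s : 'S_n) : Prop :=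
  [/\ forall G, stable_graph g A G -> stable_graph g B (relabel s G),
      forall x, cx_rel g A x -> cx_rel g B (relabel_map s x),
      forall x, cx_chain g A x ->
        cx_rel g B (relabel_map s (diff x) - diff (relabel_map s x)) &
      forall x, cx_chain g A x -> cx_rel g B (relabel_map s x) -> cx_rel g A x].

From HB Require Import structures.
From mathcomp Require Import all_boot all_order all_algebra.
From mathcomp Require Import fingroup perm freeg.
From mathcomp Require Import lra zify.
From Stdlib Require Import FunctionalExtensionality ClassicalEpsilon.

Set Implicit Arguments.
Unset Strict Implicit.
Unset Printing Implicit Defensive.

Import Order.TTheory GRing.Theory Num.Theory.
Local Open Scope ring_scope.

(* The inclusion G^(g,A_{p-1}) -> G^(g,A_p) relabels the legs by a permutation s
   putting the two chambers in order, Ch_{A_{p-1}} <= Ch_{A_p o s^-1}.  Stability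
   only gets easier in a higher chamber: the condition 2w - 2 + |v|_E + |v|_A > 0 is
   automatic, or only asks for some leg at v, unless w = 0 and |v|_E <= 1.  At a leaf
   it says that the legs at v weigh more than 1, a wall inequality (or, in genus 0 with
   at most one leg elsewhere, a consequence of the total weight exceeding 2); an
   isolated vertex carries a whole genus-0 graph and all the legs.  Relabelling
   commutes with contractions and preserves isomorphisms, so it is a chain map.
   Undoing it on the graphs that become (g, A_{p-1})-stable and killing the others is
   a retraction that maps relations to relations, whence injectivity. *)

Lemma scale_freegU (c k : rat) (G : sgraph) :
  c *: << k *g G >> = << c * k *g G >> :> chain.
Proof. by apply/eqP/freeg_eqP => H; rewrite coeffZ !coeffU mulrA. Qed.

Section Lift.
Variable F : sgraph -> chain.

HB.instance Definition _ :=
  GRing.isAdditive.Build chain chain (fglift F) (lift_is_additive F).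

Lemma fglift_is_scalable : scalable (fglift F).
Proof.
move=> c a; rewrite -[a in LHS]freeg_sumE -[a in RHS]freeg_sumE.
elim: (dom a) => [|z r IH]; first by rewrite !big_nil scaler0 raddf0 scaler0.
by rewrite !big_cons scalerDr !raddfD /= IH scale_freegU !liftU scalerA.
Qed.

HB.instance Definition _ :=
  GRing.isScalable.Build rat chain chain *:%R (fglift F) fglift_is_scalable.

Lemma fglift_gen G : fglift F (gen G) = F G.
Proof. by rewrite liftU scale1r. Qed.

End Lift.

HB.instance Definition _ := GRing.Linear.copy diff (fglift dgen).
HB.instance Definition _ n (s : 'S_n) :=
  GRing.Linear.copy (relabel_map s) (fglift (fun G => gen (relabel s G))).

Lemma diff_gen G : diff (gen G) = dgen G.
Proof. exact: fglift_gen. Qed.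

Lemma relabel_map_gen n (s : 'S_n) G : relabel_map s (gen G) = gen (relabel s G).
Proof. exact: fglift_gen. Qed.

Section Span.
Implicit Types (P Q : chain -> Prop) (f h : {linear chain -> chain}).

Lemma in_span_ind P Q : Q 0 -> (forall a b, Q a -> Q b -> Q (a + b)) ->
  (forall c a, Q a -> Q (c *: a)) -> (forall y, P y -> Q y) ->
  forall x, in_span P x -> Q x.
Proof.
move=> Q0 QD QZ PQ x [s [sP ->]]; elim: s sP => [|p s IH] sP; first by rewrite big_nil.
rewrite big_cons; apply: QD; first by apply/QZ/PQ/sP; rewrite inE eqxx.
by apply: IH => q qs; apply: sP; rewrite inE qs orbT.
Qed.

Lemma in_span_base P y : P y -> in_span P y.
Proof.
move=> Py; exists [:: (1, y)]; split; last by rewrite big_seq1 scale1r.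
by move=> p; rewrite inE => /eqP ->.
Qed.

Lemma in_span0 P : in_span P 0.
Proof. by exists [::]; rewrite big_nil. Qed.

Lemma in_spanD P a b : in_span P a -> in_span P b -> in_span P (a + b).
Proof.
move=> [s [sP ->]] [t [tP ->]]; exists (s ++ t); split; last by rewrite big_cat.
by move=> p; rewrite mem_cat => /orP [/sP|/tP].
Qed.

Lemma in_spanZ P (c : rat) a : in_span P a -> in_span P (c *: a).
Proof.
move=> [s [sP ->]]; exists [seq (c * p.1, p.2) | p <- s]; split.
  by move=> q /mapP [p ps ->]; exact: (sP p ps).
by rewrite big_map scaler_sumr; apply: eq_bigr => p _; rewrite scalerA.
Qed.

Lemma in_span_linear P (P' : chain -> Prop) f :
  (forall y, P y -> in_span P' (f y)) -> forall x, in_span P x -> in_span P' (f x).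
Proof.
move=> fP; apply: in_span_ind => [|a b|c a|//].
- by rewrite linear0; apply: in_span0.
- by rewrite linearD; apply: in_spanD.
- by rewrite linearZ; apply: in_spanZ.
Qed.

Lemma in_span_linear_eq P f h :
  (forall y, P y -> f y = h y) -> forall x, in_span P x -> f x = h x.
Proof.
move=> fh; apply: in_span_ind => [|a b|c a|//].
- by rewrite !linear0.
- by rewrite !linearD => -> ->.
- by rewrite !linearZ => ->.
Qed.

End Span.

Section WeightSums.
Variable n : nat.
Implicit Types (C : 'I_n -> rat) (X : {set 'I_n}).

Lemma wsum_setC C X : wsum C X + wsum C (~: X) = \sum_(i < n) C i.
Proof.
rewrite [RHS](bigID (mem X)) /=; congr (_ + _).
by apply: eq_bigl => i; rewrite inE.
Qed.

Lemma wsum_setT C : wsum C setT = \sum_(i < n) C i.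
Proof. by apply: eq_bigl => i; rewrite inE. Qed.

Lemma wsum_gt0 C X : (forall i, 0 < C i) -> X != set0 -> 0 < wsum C X.
Proof.
move=> C_gt0 /set0Pn [i Xi]; rewrite /wsum (bigD1 i) //=.
have : 0 <= \sum_(j in X | j != i) C j by apply: sumr_ge0 => j _; apply: ltW.
by have := C_gt0 i; lra.
Qed.

Lemma wsum_le1 C X : (forall i, 0 < C i <= 1) -> (#|X| <= 1)%N -> wsum C X <= 1.
Proof.
move=> C01; rewrite leq_eqVlt ltnS leqn0 => /orP [/cards1P [i ->]|/eqP /cards0_eq ->].
  by rewrite /wsum big_set1; case/andP: (C01 i).
by rewrite /wsum big_set0.
Qed.

(* Walls only see sets of 2 to n (n - 2 in genus 0) legs.  A set of weight > 1 has
   at least two legs, and in genus 0 a set whose complement has at most one leg has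
   B-weight > 2 - 1. *)
Lemma chamber_le_gt1 g A B X : weight_datum g A -> weight_datum g B ->
  chamber_le g A B -> 1 < wsum A X -> 1 < wsum B X.
Proof.
move=> [A01 _] [B01 sumB] leAB AX_gt1.
have X_ge2 : (2 <= #|X|)%N.
  by rewrite ltnNge; apply/negP => /(wsum_le1 A01); lra.
case: g sumB leAB => [|g] sumB leAB; last first.
  by apply: leAB => //; apply/andP; split; last by have := max_card X; rewrite card_ord.
have [X_small|X_large] := leqP #|X| (n - 2).
  by apply: leAB => //; apply/andP.
have CX_le1 : (#|~: X| <= 1)%N by have := cardsC X; rewrite card_ord; lia.
have := wsum_le1 B01 CX_le1.
have := wsum_setC B X; rewrite mulr0 in sumB; lra.
Qed.

End WeightSums.

Section Permutations.
Variable n : nat.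
Implicit Types (u v : 'S_n) (A B : 'I_n -> rat) (X : {set 'I_n}).

Lemma permute_wdM u v A : permute_wd u (permute_wd v A) = permute_wd (u * v) A.
Proof. by apply: functional_extensionality => i; rewrite /permute_wd permM. Qed.

Lemma permute_wd1 A : permute_wd 1 A = A.
Proof. by apply: functional_extensionality => i; rewrite /permute_wd perm1. Qed.

Lemma wsum_permute u A X : wsum (permute_wd u A) X = wsum A (u @: X).
Proof. by rewrite /wsum big_imset //; apply: in2W; apply: perm_inj. Qed.

Lemma wall_index_imset g u X : wall_index g (u @: X) = wall_index g X.
Proof. by rewrite /wall_index card_imset //; apply: perm_inj. Qed.

Lemma weight_datum_permute g u A : weight_datum g A -> weight_datum g (permute_wd u A).
Proof.
case=> A01 sumA; split=> [i|]; first exact: A01.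
by rewrite /permute_wd (reindex_inj (@perm_inj _ u)) in sumA.
Qed.

Lemma chamber_le_permute g u A B :
  chamber_le g A B -> chamber_le g (permute_wd u A) (permute_wd u B).
Proof.
by move=> leAB X wX; rewrite !wsum_permute; apply: leAB; rewrite wall_index_imset.
Qed.

Lemma orbit_le_chamber_le g A B : orbit_le g A B -> exists u, chamber_le g A (permute_wd u B).
Proof.
case=> s [t leAB]; exists (s^-1 * t)%g.
by have := chamber_le_permute (u := (s^-1)%g) leAB; rewrite !permute_wdM mulVg permute_wd1.
Qed.

End Permutations.

Definition well_formed (n : nat) (G : sgraph) : Prop :=
  [/\ (0 < nv G)%N, size (wt G) = nv G, size (legs G) = n,
      all (fun e => (e.1 < nv G) && (e.2 < nv G))%N (edges G) &
      all (fun v => v < nv G)%N (legs G)].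

Definition stable_at (n : nat) (C : 'I_n -> rat) (G : sgraph) (v : nat) : Prop :=
  0 < 2 * (nth 0%N (wt G) v)%:R - 2 + (valence G v)%:R + leg_weight C G v.

Definition vertex_stable (n : nat) (C : 'I_n -> rat) (G : sgraph) : Prop :=
  forall v : 'I_(nv G), stable_at C G v.

Section StableGraphs.
Variables (g n : nat).
Implicit Types (A B C D : 'I_n -> rat) (G : sgraph).

Lemma stable_graph_size C G : stable_graph g C G -> size (legs G) = n.
Proof. by case=> [[]]. Qed.

Lemma stable_graph_vertex_stable C G : stable_graph g C G -> vertex_stable C G.
Proof. by case=> _ []. Qed.

Lemma stable_graph_reweight C D G :
  stable_graph g C G -> vertex_stable D G -> stable_graph g D G.
Proof. by case=> wf [conn genus _] vsD. Qed.

Lemma leg_weight_legs_at C G v :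
  leg_weight C G v = wsum C [set i : 'I_n | nth 0%N (legs G) i == v].
Proof. by rewrite /leg_weight /wsum; apply: eq_bigl => i; rewrite inE. Qed.

Lemma valence_gt0 G e v :
  e \in edges G -> (e.1 == v) || (e.2 == v) -> (0 < valence G v)%N.
Proof.
move=> eG ev; rewrite /valence (big_rem e eG) /=.
by case/orP: ev => /eqP ->; rewrite eqxx /=; lia.
Qed.

Lemma valence0_isolated G v : well_formed n G -> connected G -> (v < nv G)%N ->
  valence G v = 0%N -> nv G = 1%N /\ edges G = [::].
Proof.
move=> [nv_gt0 _ _ edges_bd _] conn v_lt val0.
have off e : e \in edges G -> ~~ ((e.1 == v) || (e.2 == v)).
  by move=> eG; apply/negP => /(valence_gt0 eG); rewrite val0.
have nv1 : nv G = 1%N.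
  apply/eqP; rewrite eqn_leq nv_gt0 andbT leqNgt; apply/negP => nv_gt1.
  pose u := if v == 0%N then 1%N else 0%N.
  have u_lt : (u < nv G)%N by rewrite /u; case: eqP; lia.
  have /connectP [[|y p] /= vp uv] := conn (Ordinal v_lt) (Ordinal u_lt).
    by move/(congr1 val): uv => /=; rewrite /u; case: eqP => [->|v_neq0 /esym].
  by case/andP: vp; rewrite /adj /= => /orP [] /off /=; rewrite eqxx ?orbT.
split=> //; case E: (edges G) => [//|e es].
have eG : e \in edges G by rewrite E inE eqxx.
have /andP [e1_lt _] := allP edges_bd e eG.
by have := off e eG; rewrite nv1 in v_lt e1_lt; rewrite (_ : e.1 = v) ?eqxx //; lia.
Qed.

Lemma stable_graph_isolated C G v : stable_graph g C G -> (v < nv G)%N ->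
  valence G v = 0%N ->
  g = nth 0%N (wt G) v /\ [set i : 'I_n | nth 0%N (legs G) i == v] = setT.
Proof.
move=> [wf [conn genus _]] v_lt val0.
have [nv1 noE] := valence0_isolated wf conn v_lt val0.
have v0 : v = 0%N by lia.
case: wf => _ size_wt size_legs _ legs_bd; split.
  rewrite -genus /betti1 noE nv1 v0 /=.
  by move: size_wt; rewrite nv1; case: (wt G) => [|w [|]] //= _; rewrite addn0.
apply/setP => i; rewrite !inE v0.
have := allP legs_bd (nth 0%N (legs G) i) (mem_nth _ _); rewrite size_legs nv1.
by move/(_ (ltn_ord i)); case: (nth _ _ _).
Qed.

Lemma stable_graph_chamber_le A B G : weight_datum g A -> weight_datum g B ->
  chamber_le g A B -> stable_graph g A G -> stable_graph g B G.
Proof.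
move=> wdA wdB leAB sG; apply: (stable_graph_reweight sG) => v.
have := stable_graph_vertex_stable sG v; rewrite /stable_at !leg_weight_legs_at.
set X := [set i | _]; set w := nth 0%N _ _; set d := valence _ _.
have [B01 sumB] := wdB.
have B_gt0 i : 0 < B i by case/andP: (B01 i).
have w_ge0 : 0 <= w%:R :> rat by [].
have d_ge0 : 0 <= d%:R :> rat by [].
have [[w0 [d0|d1]] | core] : (w = 0 /\ (d = 0 \/ d = 1))%N \/ (1 <= w \/ 2 <= d)%N.
- by lia.
- have [g_w X_all] : g = w /\ X = setT := stable_graph_isolated sG (ltn_ord v) d0.
  by move: sumB; rewrite X_all !wsum_setT g_w w0 d0; lra.
- move=> AX; have := chamber_le_gt1 (X := X) wdA wdB leAB.
  by rewrite w0 d1 in AX *; lra.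
- have core_ge0 : 0 <= 2 * w%:R - 2 + d%:R :> rat.
    case: core => [w1|d2]; [have : 1 <= w%:R :> rat by rewrite ler1n |
                            have : 2 <= d%:R :> rat by rewrite ler_nat]; lra.
  have [->|X0] := eqVneq X set0; first by rewrite /wsum !big_set0.
  by have := wsum_gt0 B_gt0 X0; lra.
Qed.

End StableGraphs.

Section Relabel.
Variable n : nat.
Implicit Types (s : 'S_n) (C D : 'I_n -> rat) (G : sgraph).

Lemma size_relabel s G : size (legs (relabel s G)) = n.
Proof. by rewrite /legs /relabel /= size_map size_enum_ord. Qed.

Lemma nth_relabel s G (i : 'I_n) :
  nth 0%N (legs (relabel s G)) i = nth 0%N (legs G) (s i).
Proof. by rewrite /legs /relabel /= (nth_map i) ?size_enum_ord // nth_ord_enum. Qed.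

Lemma relabelK s G : size (legs G) = n -> relabel s^-1 (relabel s G) = G.
Proof.
case: G => [[[k w] E] l] /= size_l; congr (_, _).
apply: (@eq_from_nth _ 0%N); rewrite size_map size_enum_ord // => i i_lt.
have -> : i = Ordinal i_lt by [].
by rewrite (nth_map (Ordinal i_lt)) ?size_enum_ord // nth_ord_enum nth_relabel permKV.
Qed.

Lemma leg_weight_relabel C s G v :
  leg_weight C (relabel s G) v = leg_weight (permute_wd s^-1 C) G v.
Proof.
rewrite /leg_weight (reindex_inj (@perm_inj _ s^-1)) /=.
by apply: eq_bigl => i; rewrite nth_relabel permKV.
Qed.

Lemma stable_graph_relabel g C D s G : stable_graph g C G ->
  (stable_graph g D (relabel s G) <-> vertex_stable (permute_wd s^-1 D) G).
Proof.
have lw v : stable_at D (relabel s G) v = stable_at (permute_wd s^-1 D) G v.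
  by rewrite /stable_at leg_weight_relabel.
case=> [[nv_gt0 size_wt size_l edges_bd legs_bd] [conn genus _]]; split.
  by case=> _ [_ _ vs] v; rewrite -lw; apply: vs.
move=> vs; split; split=> //; last by move=> v; move: (vs v); rewrite -lw.
  exact: size_relabel.
apply/allP => _ /mapP [i _ ->]; apply: (allP legs_bd).
by rewrite mem_nth // size_l ltn_ord.
Qed.

Lemma iso_sign_relabel s G G' c : size (legs G) = n -> size (legs G') = n ->
  iso_sign G G' c -> iso_sign (relabel s G) (relabel s G') c.
Proof.
move=> size_l size_l' [k [m [pi [sigma [[nvG nvG' sE sE' _] [w_pi l_pi e_pi sgn]]]]]].
exists k, m, pi, sigma; split; split=> //; first by rewrite !size_relabel.
move=> i v; rewrite size_relabel => i_lt.
rewrite (nth_relabel s G (Ordinal i_lt)) (nth_relabel s G' (Ordinal i_lt)).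
by apply: l_pi; rewrite size_l.
Qed.

Lemma contract_relabel s G j : size (legs G) = n ->
  contract (relabel s G) j = relabel s (contract G j).
Proof.
move=> size_l; rewrite /contract /relabel /=; congr (_, _).
by rewrite -map_comp; apply: eq_map => i /=; rewrite (nth_map 0%N) // size_l.
Qed.

Lemma dgen_relabel s G : size (legs G) = n -> dgen (relabel s G) = relabel_map s (dgen G).
Proof.
move=> size_l; rewrite /dgen linear_sum; apply: eq_bigr => j _.
by rewrite linearZ /= relabel_map_gen contract_relabel.
Qed.

End Relabel.

Section Isomorphisms.
Variables (G G' : sgraph) (pi : 'S_(nv G)).

Lemma valence_perm m (sigma : 'S_m) :
  size (edges G) = m -> size (edges G') = m ->
  all (fun e => (e.1 < nv G) && (e.2 < nv G))%N (edges G) ->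
  (forall (j : 'I_m) (a b : 'I_(nv G)),
     nth (0, 0)%N (edges G) j = (val a, val b) ->
     nth (0, 0)%N (edges G') (sigma j) = (val (pi a), val (pi b)) \/
     nth (0, 0)%N (edges G') (sigma j) = (val (pi b), val (pi a))) ->
  forall v, valence G' (pi v) = valence G v.
Proof.
move=> size_E size_E' edges_bd e_pi v.
rewrite /valence (big_nth (0, 0)%N) size_E' big_mkord [RHS](big_nth (0, 0)%N) size_E big_mkord.
rewrite (reindex_inj (@perm_inj _ sigma)) /=; apply: eq_bigr => j _.
case Ej: (nth (0, 0)%N (edges G) j) => [a b].
have /andP [a_lt b_lt] : (a < nv G)%N && (b < nv G)%N.
  rewrite -[a]/((a, b).1) -[b]/((a, b).2) -Ej.
  by apply: (allP edges_bd); rewrite mem_nth ?size_E.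
have pi_eq (x : 'I_(nv G)) : (val (pi x) == val (pi v)) = (val x == val v).
  by rewrite !(inj_eq val_inj) (inj_eq perm_inj).
by case: (e_pi j (Ordinal a_lt) (Ordinal b_lt) Ej) => -> /=; rewrite !pi_eq // addnC.
Qed.

Lemma leg_weight_perm n (C : 'I_n -> rat) :
  size (legs G) = n -> all (fun v => v < nv G)%N (legs G) ->
  (forall (i : nat) (v : 'I_(nv G)), (i < size (legs G))%N ->
     nth 0%N (legs G) i = val v -> nth 0%N (legs G') i = val (pi v)) ->
  forall v, leg_weight C G' (pi v) = leg_weight C G v.
Proof.
move=> size_l legs_bd l_pi v; apply: eq_bigl => i.
have u_lt : (nth 0%N (legs G) i < nv G)%N by apply: (allP legs_bd); rewrite mem_nth ?size_l.
rewrite (l_pi i (Ordinal u_lt)) ?size_l //.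
by rewrite -[nth _ _ _ in RHS]/(val (Ordinal u_lt)) !(inj_eq val_inj) (inj_eq perm_inj).
Qed.

End Isomorphisms.

Lemma vertex_stableP n (C : 'I_n -> rat) G :
  vertex_stable C G <-> (forall v, (v < nv G)%N -> stable_at C G v).
Proof. by split=> vs v; [move=> v_lt; apply: (vs (Ordinal v_lt)) | apply: vs]. Qed.

Lemma vertex_stable_iso n (D : 'I_n -> rat) G G' c :
  well_formed n G -> iso_sign G G' c -> (vertex_stable D G <-> vertex_stable D G').
Proof.
move=> [_ _ size_l edges_bd legs_bd].
move=> [k [m [pi [sigma [[nvG nvG' size_E size_E' _] [w_pi l_pi e_pi _]]]]]].
subst k.
have pi_at v : stable_at D G' (pi v) <-> stable_at D G v.
  rewrite /stable_at w_pi (valence_perm size_E size_E' edges_bd e_pi).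
  by rewrite (leg_weight_perm _ size_l legs_bd l_pi).
split=> /vertex_stableP vs; apply/vertex_stableP => v v_lt.
  rewrite nvG' in v_lt.
  by have /pi_at := vs _ (ltn_ord (pi^-1 (Ordinal v_lt))%g); rewrite permKV.
by apply/(pi_at (Ordinal v_lt))/vs; rewrite nvG'.
Qed.

Section InducedMap.
Variables (g n : nat) (A B : 'I_n -> rat) (s : 'S_n).

Lemma relabel_map_rel :
  (forall G, stable_graph g A G -> stable_graph g B (relabel s G)) ->
  forall x, cx_rel g A x -> cx_rel g B (relabel_map s x).
Proof.
move=> stab; apply: in_span_linear => _ [G [G' [c [sG sG' iso ->]]]].
rewrite linearB linearZ /= !relabel_map_gen; apply: in_span_base.
exists (relabel s G), (relabel s G'), c; split; [exact: stab | exact: stab | | by []].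
exact: iso_sign_relabel (stable_graph_size sG) (stable_graph_size sG') iso.
Qed.

Lemma relabel_map_diff x : cx_chain g A x -> relabel_map s (diff x) = diff (relabel_map s x).
Proof.
apply: (in_span_linear_eq (f := relabel_map s \o diff) (h := diff \o relabel_map s)).
move=> _ [G [sG ->]] /=.
by rewrite diff_gen relabel_map_gen diff_gen dgen_relabel ?(stable_graph_size sG).
Qed.

(* The retraction [r] undoes the relabelling on the graphs that become (g, A)-stable
   and kills the others; isomorphic (g, B)-stable graphs are kept or killed together,
   so [r] maps relations to relations. *)
Lemma relabel_map_reflects_rel x :
  cx_chain g A x -> cx_rel g B (relabel_map s x) -> cx_rel g A x.
Proof.
move=> x_chain x_rel.
pose keep H := stable_graph g A (relabel s^-1 H).
pose r := fglift (fun H => if excluded_middle_informative (keep H)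
                           then gen (relabel s^-1 H) else 0).
have rK : r (relabel_map s x) = x.
  apply: (in_span_linear_eq (f := r \o relabel_map s) (h := idfun) _ x_chain).
  move=> _ [G [sG ->]] /=; rewrite relabel_map_gen fglift_gen /keep.
  by rewrite relabelK ?(stable_graph_size sG) //; case: excluded_middle_informative.
have keep_iso H H' c : stable_graph g B H -> stable_graph g B H' -> iso_sign H H' c ->
    keep H <-> keep H'.
  move=> sH sH' iso.
  rewrite /keep (stable_graph_relabel _ _ sH) (stable_graph_relabel _ _ sH').
  exact: vertex_stable_iso (proj1 sH) iso.
rewrite -rK; apply: in_span_linear x_rel => _ [H [H' [c [sH sH' iso ->]]]].
rewrite linearB linearZ /= !fglift_gen.
case: excluded_middle_informative => kH; case: excluded_middle_informative => kH'.
- apply: in_span_base; exists (relabel s^-1 H), (relabel s^-1 H'), c; split=> //.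
  exact: iso_sign_relabel (stable_graph_size sH) (stable_graph_size sH') iso.
- by case: kH'; apply/(keep_iso _ _ _ sH sH' iso).
- by case: kH; apply/(keep_iso _ _ _ sH sH' iso).
- by rewrite scaler0 subr0; apply: in_span0.
Qed.

End InducedMap.

Lemma induced_injective_chain_map_chamber_le g n (A B : 'I_n -> rat) (s : 'S_n) :
  weight_datum g A -> weight_datum g B -> chamber_le g A (permute_wd s^-1 B) ->
  induced_injective_chain_map g A B s.
Proof.
move=> wdA wdB leAB.
have stab G : stable_graph g A G -> stable_graph g B (relabel s G).
  move=> sG; apply/(stable_graph_relabel _ _ sG).
  apply: stable_graph_vertex_stable.
  exact: stable_graph_chamber_le wdA (weight_datum_permute _ wdB) leAB sG.
split=> //; [exact: relabel_map_rel | | exact: relabel_map_reflects_rel].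
by move=> x /relabel_map_diff ->; rewrite subrr; apply: in_span0.
Qed.

Theorem mainTheorem8 (g n N : nat) (A : 'I_n -> rat) (As : nat -> 'I_n -> rat) :
  (1 <= n)%N -> (1 <= N)%N ->
  weight_datum g A -> As N = A ->
  (forall p, (1 <= p <= N)%N -> weight_datum g (As p) /\ in_chamber g (As p)) ->
  (forall p, (2 <= p <= N)%N -> orbit_le g (As p.-1) (As p)) ->
  forall p, (2 <= p <= N)%N ->
    exists s : 'S_n, induced_injective_chain_map g (As p.-1) (As p) s.
Proof.
move=> _ _ _ _ wd le p p_range.
have /wd [wdA _] : (1 <= p.-1 <= N)%N by lia.
have /wd [wdB _] : (1 <= p <= N)%N by lia.
have [u leAB] := orbit_le_chamber_le (le p p_range).
exists u^-1%g; apply: induced_injective_chain_map_chamber_le => //.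
by rewrite invgK.
Qed.
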